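(* Let $X_1,\dots,X_n,Y_{11},\dots,Y_{1n}$ be i.i.d. non-negative absolutely continuous random variables. Let $\tau_{n|n}(\mathbf X)=\min\{X_1,\dots,X_n\}$, $\tau_{n|n}(\mathbf Y_1)=\min\{Y_{11},\dots,Y_{1n}\}$ and $\tau_{n|n}(\mathbf X\vee\mathbf Y_1)=\min_{1\le j\le n}\max\{X_j,Y_{1j}\}$. Then $$\max\{\tau_{n|n}(\mathbf X),\tau_{n|n}(\mathbf Y_1)\}\underset{c}{\succ}\tau_{n|n}(\mathbf X\vee\mathbf Y_1).$$
   Context: All random variables are non-negative and absolutely continuous with support $[0,\infty)$. For a random variable $W$: density $f_W$, survival $\bar F_W$, hazard rate $r_W=f_W/\bar F_W$. $U\underset{c}{\prec}V$ means $r_U(x)/r_V(x)$ is increasing (non-decreasing) in $x\ge0$; $U\underset{c}{\succ}V$ means $V\underset{c}{\prec}U$. *)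

From mathcomp Require Import all_boot all_order all_algebra.
From mathcomp Require Import all_classical all_reals all_analysis.
Set Implicit Arguments. Unset Strict Implicit. Unset Printing Implicit Defensive.
Import Order.TTheory GRing.Theory Num.Theory.
Local Open Scope classical_set_scope.
Local Open Scope ring_scope.

Section Defs.
Context (d : measure_display) (T : measurableType d) (R : realType)
        (P : probability T R).

(* mutual independence of a finite family of real random variables:
   product rule for every choice of Borel sets (taking B i = setT
   gives every subfamily). *)
Definition mutually_independent (I : finType) (Z : I -> T -> R) : Prop :=
  forall B : I -> set R, (forall i, measurable (B i)) ->
    P (\big[setI/setT]_(i : I) (Z i @^-1` B i))
    = (\prod_(i : I) P (Z i @^-1` B i))%E.

Definition identically_distributed (I : finType) (Z : I -> T -> R) : Prop :=
  forall i j (B : set R), measurable B -> P (Z i @^-1` B) = P (Z j @^-1` B).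

Definition abs_continuous (W : T -> R) : Prop :=
  forall B : set R, measurable B -> (@lebesgue_measure R) B = 0%E ->
    P (W @^-1` B) = 0%E.

Definition support_nonneg_halfline (W : T -> R) : Prop :=
  P (W @^-1` `[0, +oo[) = 1%E /\
  forall x e : R, 0 <= x -> 0 < e -> (0 < P (W @^-1` [set w : R | x - e < w < x + e]%R))%E.

Definition cdf (W : T -> R) (x : R) : R := fine (P (W @^-1` `]-oo, x])).
Definition survival (W : T -> R) (x : R) : R := 1 - cdf W x.
(* density = derivative of the cdf (meaningful where derivable) *)
Definition density (W : T -> R) (x : R) : R := derive1 (cdf W) x.
Definition hazard (W : T -> R) (x : R) : R := density W x / survival W x.

(* U <_c V : r_U / r_V is non-decreasing on [0, +oo), at the points
   where both hazard rates are defined (cdf derivable) and r_V > 0. *)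
Definition hr_ratio_le (U V : T -> R) : Prop :=
  forall x y : R, 0 <= x -> x <= y ->
    derivable (cdf U) x 1 -> derivable (cdf U) y 1 ->
    derivable (cdf V) x 1 -> derivable (cdf V) y 1 ->
    0 < hazard V x -> 0 < hazard V y ->
    hazard U x / hazard V x <= hazard U y / hazard V y.

Definition hr_ratio_ge (U V : T -> R) : Prop := hr_ratio_le V U.

End Defs.

Definition min_ord (R : realType) (n : nat) (z : 'I_n.+1 -> R) : R :=
  \big[Num.min/z ord0]_(j < n.+1) z j.

(* Write F for the common distribution function and s = 1 - F x. Independence,
   applied blockwise and passed to complements of the block events by
   inclusion-exclusion, gives the distribution functions
   (1 - s^(n+1))^2 for max(min X, min Y) and 1 - (1 - F^2)^(n+1) for
   min_j max(X_j, Y_j). Both hazard rates are then explicit multiples of F' x,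
   which cancels in their ratio, leaving
   (2 - s^(n+1)) / (1 - s^(n+1) + 1 + s + ... + s^n), a nonincreasing function
   of s on [0, 1]; as s decreases with x, the ratio increases. Derivability of
   F itself is recovered by inverting the first distribution function on ]0, 1[. *)

From Pilot Require Import Defs.
From mathcomp Require Import all_boot all_order all_algebra.
From mathcomp Require Import all_classical all_reals all_analysis.
From mathcomp Require Import ring lra.
Import Order.TTheory GRing.Theory Num.Theory.
Local Open Scope classical_set_scope.
Local Open Scope ring_scope.

Section Fermat.
Context (R : realType).

Lemma derive1_at_global_max (f : R -> R) c :
  derivable f c 1 -> (forall t, f t <= f c) -> 'D_1 f c = 0.
Proof.
move=> dfc cmax; apply/eqP; rewrite eq_le; apply/andP; split.
  rewrite ['D_1 f c]cvg_at_rightE; last exact: dfc.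
  apply: limr_le.
    rewrite -(cvg_at_rightE (fun h : R => h^-1 *: ((f \o shift c) _ - f c))) //.
    apply: cvg_trans dfc; apply: cvg_app.
    move=> A [e egt0 Ae]; exists e => // x xe xgt0; apply: Ae => //.
    exact/lt0r_neq0.
  near=> h; apply: mulr_ge0_le0; last by rewrite subr_le0; apply: cmax.
  by rewrite invr_ge0; apply: ltW; near: h; exists 1 => /=.
rewrite ['D_1 f c]cvg_at_leftE; last exact: dfc.
apply: limr_ge.
  rewrite -(cvg_at_leftE (fun h => h^-1 *: ((f \o shift c) _ - f c))) //.
  apply: cvg_trans dfc; apply: cvg_app.
  move=> A [e egt0 Ae]; exists e => // x xe xgt0; apply: Ae => //.
  exact/ltr0_neq0.
near=> h; apply: mulr_le0; last by rewrite subr_le0; apply: cmax.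
by rewrite invr_le0; apply: ltW; near: h; exists 1 => /=.
Unshelve. all: by end_near. Qed.

Lemma derive1_at_global_min (f : R -> R) c :
  derivable f c 1 -> (forall t, f c <= f t) -> 'D_1 f c = 0.
Proof.
move=> dfc cmin; apply/eqP; rewrite -oppr_eq0 -deriveN //; apply/eqP.
by apply: derive1_at_global_max; [exact: derivableN | move=> t; rewrite lerN2].
Qed.

End Fermat.

Lemma sum_expr_ge1 {R : numDomainType} (k : nat) {s : R} :
  0 <= s -> 1 <= \sum_(i < k.+1) s ^+ i.
Proof.
move=> s_ge0; rewrite big_ord_recl expr0 lerDl.
by apply: sumr_ge0 => i _; apply: exprn_ge0.
Qed.

Section MinMaxHazard.
Context {R : realType} (n : nat).
Implicit Types (F : R -> R) (s x y : R).

Definition hazard_of_cdf (G : R -> R) x := derive1 G x / (1 - G x).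

Definition cdf_max_of_mins F x := (1 - (1 - F x) ^+ n.+1) ^+ 2.

Definition cdf_min_of_maxes F x := 1 - (1 - F x ^+ 2) ^+ n.+1.

Definition min_max_hazard_ratio s :=
  (2 - s ^+ n.+1) / (1 - s ^+ n.+1 + \sum_(i < n.+1) s ^+ i).

Lemma min_max_hazard_ratio_nonincr s1 s2 :
  0 <= s1 -> s1 <= s2 -> s2 <= 1 ->
  min_max_hazard_ratio s2 <= min_max_hazard_ratio s1.
Proof.
move=> s1_ge0 s12 s2_le1; have s2_ge0 := le_trans s1_ge0 s12.
have A1 := sum_expr_ge1 n s1_ge0; have A2 := sum_expr_ge1 n s2_ge0.
have A12 : \sum_(i < n.+1) s1 ^+ i <= \sum_(i < n.+1) s2 ^+ i.
  by apply: ler_sum => i _; apply: lerXn2r; rewrite ?nnegrE.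
have u12 : s1 ^+ n.+1 <= s2 ^+ n.+1 by apply: lerXn2r; rewrite ?nnegrE.
have u2 : s2 ^+ n.+1 <= 1 by apply: exprn_ile1.
have u1 : 0 <= s1 ^+ n.+1 by apply: exprn_ge0.
move: A1 A2 A12 u12 u2 u1; rewrite /min_max_hazard_ratio.
set a1 := \sum_(i < n.+1) _; set a2 := \sum_(i < n.+1) _.
set v1 := s1 ^+ _; set v2 := s2 ^+ _ => A1 A2 A12 u12 u2 u1.
rewrite ler_pdivrMr; last by lra.
rewrite mulrAC ler_pdivlMr; last by lra.
nra.
Qed.

Lemma min_max_hazard_ratioE s : 0 <= s < 1 ->
  min_max_hazard_ratio s =
  (1 - s) * (2 - s ^+ n.+1) / ((2 - s) * (1 - s ^+ n.+1)).
Proof.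
move=> /andP[s_ge0 s_lt1].
have geom : 1 - s ^+ n.+1 = (1 - s) * \sum_(i < n.+1) s ^+ i.
  by rewrite -opprB subrX1 -mulNr opprB.
have sum_gt0 := lt_le_trans ltr01 (sum_expr_ge1 n s_ge0).
rewrite /min_max_hazard_ratio geom; set A := \sum_(i < n.+1) _ in sum_gt0 *.
rewrite (_ : (1 - s) * A + A = (2 - s) * A); last by ring.
field; rewrite !gt_eqF //; lra.
Qed.

Lemma derive1_cdf_max_of_mins F x : derivable F x 1 ->
  derive1 (cdf_max_of_mins F) x =
  2 * n.+1%:R * (1 - F x) ^+ n * (1 - (1 - F x) ^+ n.+1) * derive1 F x.
Proof.
move=> /derivableP dF; rewrite !derive1E.
have dU := is_deriveX 2 (is_deriveB (is_derive_cst (1 : R) x 1)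
  (is_deriveX n.+1 (is_deriveB (is_derive_cst (1 : R) x 1) dF))).
have -> : cdf_max_of_mins F = (cst 1 - (cst 1 - F) ^+ n.+1) ^+ 2.
  by apply/funext => y; rewrite /cdf_max_of_mins !fctE.
rewrite (@derive_val _ _ _ _ _ _ _ dU) !fctE /= -![_ *: _]/(_ * _) expr1; ring.
Qed.

Lemma derive1_cdf_min_of_maxes F x : derivable F x 1 ->
  derive1 (cdf_min_of_maxes F) x =
  2 * n.+1%:R * (1 - F x ^+ 2) ^+ n * F x * derive1 F x.
Proof.
move=> /derivableP dF; rewrite !derive1E.
have dV := is_deriveB (is_derive_cst (1 : R) x 1)
  (is_deriveX n.+1 (is_deriveB (is_derive_cst (1 : R) x 1) (is_deriveX 2 dF))).
have -> : cdf_min_of_maxes F = cst 1 - (cst 1 - F ^+ 2) ^+ n.+1.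
  by apply/funext => y; rewrite /cdf_min_of_maxes !fctE.
rewrite (@derive_val _ _ _ _ _ _ _ dV) !fctE /= -![_ *: _]/(_ * _) expr1; ring.
Qed.

Lemma hazard_of_cdf_max_of_mins F x : derivable F x 1 -> 0 <= F x < 1 ->
  hazard_of_cdf (cdf_max_of_mins F) x =
  2 * n.+1%:R * (1 - (1 - F x) ^+ n.+1) * derive1 F x
  / ((1 - F x) * (2 - (1 - F x) ^+ n.+1)).
Proof.
move=> dF /andP[F_ge0 F_lt1].
rewrite /hazard_of_cdf derive1_cdf_max_of_mins // /cdf_max_of_mins exprS.
set s := 1 - F x; set p := s ^+ n.
have s_gt0 : 0 < s by rewrite subr_gt0.
have p_gt0 : 0 < p by rewrite exprn_gt0.
have s_le1 : s <= 1 by rewrite /s; lra.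
have sp_le1 : s * p <= 1 by rewrite -exprS exprn_ile1 // ltW.
rewrite (_ : 1 - (1 - s * p) ^+ 2 = s * p * (2 - s * p)); last by ring.
field; rewrite !gt_eqF //; lra.
Qed.

Lemma hazard_of_cdf_min_of_maxes F x : derivable F x 1 -> 0 <= F x < 1 ->
  hazard_of_cdf (cdf_min_of_maxes F) x =
  2 * n.+1%:R * F x * derive1 F x / ((1 - F x) * (1 + F x)).
Proof.
move=> dF /andP[F_ge0 F_lt1].
rewrite /hazard_of_cdf derive1_cdf_min_of_maxes // /cdf_min_of_maxes.
rewrite (_ : 1 - (1 - _ ^+ n.+1) = (1 - F x ^+ 2) ^+ n.+1); last by ring.
rewrite (_ : 1 - F x ^+ 2 = (1 - F x) * (1 + F x)); last by ring.
rewrite exprS; set q := (_ * _) ^+ n.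
have q_gt0 : 0 < q by rewrite exprn_gt0 // mulr_gt0 //; lra.
field; rewrite !gt_eqF //; lra.
Qed.

Lemma derivable_of_cdf_max_of_mins F x : (forall y, 0 <= F y <= 1) ->
  0 < cdf_max_of_mins F x < 1 -> derivable (cdf_max_of_mins F) x 1 ->
  derivable F x 1.
Proof.
move=> F01 /andP[U_gt0 U_lt1] /derivableP dU.
set U := cdf_max_of_mins F in U_gt0 U_lt1 dU *.
pose psi (u : R) := 1 - (1 - Num.sqrt u) `^ n.+1%:R^-1.
have F_psiU : F = psi \o U.
  apply/funext => y; have /andP[F_ge0 F_le1] := F01 y.
  have s_ge0 : 0 <= 1 - F y by rewrite subr_ge0.
  have u_le1 : (1 - F y) ^+ n.+1 <= 1 by rewrite exprn_ile1 // lerBlDr lerDl.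
  rewrite /= /psi /U /cdf_max_of_mins sqrtr_sqr ger0_norm ?subr_ge0 //.
  rewrite (_ : 1 - (1 - _) = (1 - F y) ^+ n.+1); last by ring.
  rewrite -powR_mulrn // -powRrM mulfV ?powRr1 ?pnatr_eq0 //; ring.
have sqrtU_lt1 : 0 < 1 - Num.sqrt (U x).
  by rewrite subr_gt0 -[X in _ < X]sqrtr1 ltr_sqrt.
have dsqrt := is_deriveB (is_derive_cst (1 : R) (U x) 1) (is_derive1_sqrt U_gt0).
have dpsi := is_deriveB (is_derive_cst (1 : R) (U x) 1)
  (@is_derive1_comp R (fun w => w `^ n.+1%:R^-1) (fun u => 1 - Num.sqrt u) _ _ _
     (is_derive1_powR n.+1%:R^-1 sqrtU_lt1) dsqrt).
by rewrite F_psiU; case: (is_derive1_comp dpsi dU).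
Qed.

Lemma hazard_ratio_min_of_maxes F x : (forall y, 0 <= F y <= 1) ->
  derivable (cdf_max_of_mins F) x 1 -> 0 < hazard_of_cdf (cdf_max_of_mins F) x ->
  hazard_of_cdf (cdf_min_of_maxes F) x / hazard_of_cdf (cdf_max_of_mins F) x =
  min_max_hazard_ratio (1 - F x).
Proof.
move=> F01 dU hU_gt0.
have U01 y : 0 <= cdf_max_of_mins F y <= 1.
  have /andP[F_ge0 F_le1] := F01 y.
  have u01 : 0 <= (1 - F y) ^+ n.+1 <= 1.
    by rewrite exprn_ge0 ?exprn_ile1 ?subr_ge0 // lerBlDr lerDl.
  by rewrite sqr_ge0 exprn_ile1 //; lra.
(* where [U x = 1] the hazard rate is the junk value [_ / 0 = 0] *)
have U_lt1 : cdf_max_of_mins F x < 1.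
  rewrite lt_neqAle (andP (U01 x)).2 andbT; apply: contraTneq hU_gt0 => U1.
  by rewrite /hazard_of_cdf U1 subrr invr0 mulr0 ltxx.
have U_gt0 : 0 < cdf_max_of_mins F x.
  rewrite lt_neqAle (andP (U01 x)).1 andbT eq_sym.
  apply: contraTneq hU_gt0 => U0.
  rewrite /hazard_of_cdf derive1E derive1_at_global_min ?mul0r ?ltxx // => t.
  by rewrite U0 (andP (U01 t)).1.
have dF : derivable F x 1 by apply: derivable_of_cdf_max_of_mins; rewrite ?U_gt0.
have /andP[F_ge0 F_le1] := F01 x.
have F_neq0 : F x != 0.
  apply: contraTneq U_gt0 => F0.
  by rewrite /cdf_max_of_mins F0 subr0 expr1n subrr expr0n ltxx.
have F_neq1 : F x != 1.
  apply: contraTneq U_lt1 => F1.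
  by rewrite /cdf_max_of_mins F1 subrr expr0n subr0 expr1n ltxx.
have F_lt1 : 0 <= F x < 1 by rewrite F_ge0 lt_neqAle F_neq1.
rewrite hazard_of_cdf_min_of_maxes // hazard_of_cdf_max_of_mins // in hU_gt0 *.
rewrite min_max_hazard_ratioE; last by apply/andP; split; lra.
have u_le1 : (1 - F x) ^+ n.+1 <= 1 by rewrite exprn_ile1 //; lra.
move: hU_gt0 u_le1; set a := derive1 F x; set u := (1 - F x) ^+ n.+1.
move=> /lt0r_neq0; rewrite !mulf_eq0 !negb_or.
move=> /andP[/andP[/andP[_ u_neq1] a_neq0] _] u_le1.
field; rewrite u_neq1 a_neq0 /= !gt_eqF //; have := ler0n R n; lra.
Qed.

Lemma hazard_ratio_min_of_maxes_nondecreasing F x y :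
  (forall t, 0 <= F t <= 1) -> {homo F : s1 s2 / s1 <= s2} -> x <= y ->
  derivable (cdf_max_of_mins F) x 1 -> derivable (cdf_max_of_mins F) y 1 ->
  0 < hazard_of_cdf (cdf_max_of_mins F) x ->
  0 < hazard_of_cdf (cdf_max_of_mins F) y ->
  hazard_of_cdf (cdf_min_of_maxes F) x / hazard_of_cdf (cdf_max_of_mins F) x <=
  hazard_of_cdf (cdf_min_of_maxes F) y / hazard_of_cdf (cdf_max_of_mins F) y.
Proof.
move=> F01 F_mono xy dUx dUy hUx hUy.
rewrite !hazard_ratio_min_of_maxes //.
have := F01 x; have := F01 y; have := F_mono _ _ xy.
move=> Fxy /andP[Fy_ge0 Fy_le1] /andP[Fx_ge0 Fx_le1].
by apply: min_max_hazard_ratio_nonincr; lra.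
Qed.

End MinMaxHazard.

Lemma in_bigsetI (T : Type) (I : finType) (Q : pred I) (G : I -> set T) t :
  (\big[setI/setT]_(i | Q i) G i) t <-> (forall i, Q i -> G i t).
Proof.
rewrite -bigcap_seq_cond; split=> [Gt i Qi | Gt i /andP[_ /Gt //]].
by apply: Gt; rewrite /= mem_index_enum.
Qed.

Section Independence.
Context {d} {T : measurableType d} {R : realType} (P : probability T R).

Lemma mutually_independent_blocks {I' I : finType} {Z : I' -> T -> R}
    (b : I' -> I) (A : I' -> set R) :
  (forall i, measurable (A i)) -> mutually_independent P Z ->
  forall K : {set I},
  P (\big[setI/setT]_(k in K) \big[setI/setT]_(i | b i == k) (Z i @^-1` A i)) =
  (\prod_(k in K) \prod_(i | b i == k) P (Z i @^-1` A i))%E.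
Proof.
move=> mA indep K.
pose B i := if b i \in K then A i else setT.
have mB i : measurable (B i) by rewrite /B; case: ifP.
have -> : \big[setI/setT]_(k in K) \big[setI/setT]_(i | b i == k) (Z i @^-1` A i)
    = \big[setI/setT]_(i : I') (Z i @^-1` B i).
  apply/seteqP; split => t /in_bigsetI Zt; apply/in_bigsetI.
  - move=> i _; rewrite /B /preimage /=; case: ifPn => // biK.
    by have /in_bigsetI := Zt (b i) biK; apply.
  - move=> k kK; apply/in_bigsetI => i /eqP bik.
    by have := Zt i isT; rewrite /B /preimage /= bik kK.
rewrite indep // (bigID (fun i => b i \in K)) /=.
rewrite [X in (_ * X)%E]big1 ?mule1; last first.
  by move=> i /negbTE biK; rewrite /B biK preimage_setT probability_setT.
rewrite (partition_big b (fun k => k \in K)) //=.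
apply: eq_bigr => k kK; apply: eq_big => i.
  by case: eqP => [->|]; rewrite ?kK ?andbF.
by move=> /andP [biK _]; rewrite /B biK.
Qed.

Lemma probability_bigsetI_setC {I : finType} {G : I -> set T} {p : I -> R} :
  (forall i, measurable (G i)) ->
  (forall K : {set I},
    P (\big[setI/setT]_(k in K) G k) = (\prod_(k in K) p k)%:E) ->
  forall J K : {set I}, [disjoint K & J]%B ->
  P (\big[setI/setT]_(k in K) G k `&` \big[setI/setT]_(j in J) ~` G j) =
  ((\prod_(k in K) p k) * \prod_(j in J) (1 - p j))%:E.
Proof.
move=> mG PG J; have [m] := ubnP #|J|; elim: m J => // m IH J.
have [-> _ K _|[j jJ] ltJ K dKJ] := set_0Vmem J.
  by rewrite !big_set0 setIT PG mulr1.
have jK : j \notin K by rewrite (disjointFl dKJ jJ).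
have ltJ' : (#|J :\ j| < m)%N by move: ltJ; rewrite (cardsD1 j J) jJ.
have dKJ' : [disjoint K & J :\ j]%B.
  by apply: disjointWr dKJ; apply: subsetDl.
have dKJ'' : [disjoint j |: K & J :\ j]%B.
  rewrite -setI_eq0 finset.setIUl (disjoint_setI0 dKJ') finset.setU0.
  by rewrite setI_eq0 disjoints1 !inE eqxx.
rewrite !(big_setD1 j jJ) /=.
set E := \big[setI/setT]_(k in K) G k `&` \big[setI/setT]_(i in J :\ j) ~` G i.
have mE : measurable E.
  by apply: measurableI; apply: bigsetI_measurable => i _ //; apply: measurableC.
rewrite [~` G j `&` _]setIC setIA -setDE measureD //; last first.
  by apply: le_lt_trans (probability_le1 P mE) _; apply: ltey.
rewrite -[LHS]/(P E - P (E `&` G j))%E (IH _ ltJ' K dKJ').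
have -> : E `&` G j =
    \big[setI/setT]_(k in j |: K) G k `&` \big[setI/setT]_(i in J :\ j) ~` G i.
  by rewrite big_setU1 //= /E setIAC [G j `&` _]setIC.
rewrite (IH _ ltJ' _ dKJ'') big_setU1 //= -EFinB; congr EFin; ring.
Qed.

Lemma probability_bigsetI_setC_blocks {I' I : finType} {Z : I' -> T -> R}
    (b : I' -> I) (A : I' -> set R) (c : I' -> R) :
  (forall i, measurable_fun setT (Z i)) -> (forall i, measurable (A i)) ->
  mutually_independent P Z -> (forall i, P (Z i @^-1` A i) = (c i)%:E) ->
  P (\big[setI/setT]_(k : I) ~` \big[setI/setT]_(i | b i == k) (Z i @^-1` A i)) =
  (\prod_(k : I) (1 - \prod_(i | b i == k) c i))%:E.
Proof.
move=> mZ mA indep PZA.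
pose G k := \big[setI/setT]_(i | b i == k) (Z i @^-1` A i).
have mG k : measurable (G k).
  by apply: bigsetI_measurable => i _; rewrite -[_ @^-1` _]setTI; apply: mZ.
have PG (K : {set I}) : P (\big[setI/setT]_(k in K) G k) =
    (\prod_(k in K) \prod_(i | b i == k) c i)%:E.
  rewrite /G mutually_independent_blocks // -prodEFin; apply: eq_bigr => k _.
  by rewrite -prodEFin; apply: eq_bigr => i _.
have := probability_bigsetI_setC mG PG [set: I] finset.set0.
rewrite !big_set0 setTI mul1r !(eq_bigl _ _ (@finset.in_setT I)) => -> //.
by rewrite -setI_eq0 finset.set0I.
Qed.

Lemma probability_bigsetU_blocks {I' I : finType} {Z : I' -> T -> R}
    (b : I' -> I) (A : I' -> set R) (c : I' -> R) :
  (forall i, measurable_fun setT (Z i)) -> (forall i, measurable (A i)) ->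
  mutually_independent P Z -> (forall i, P (Z i @^-1` A i) = (c i)%:E) ->
  P (\big[setU/set0]_(k : I) \big[setI/setT]_(i | b i == k) (Z i @^-1` A i)) =
  (1 - \prod_(k : I) (1 - \prod_(i | b i == k) c i))%:E.
Proof.
move=> mZ mA indep PZA.
rewrite -[X in P X]setCK setC_bigsetU probability_setC; last first.
  apply: bigsetI_measurable => k _; apply: measurableC.
  by apply: bigsetI_measurable => i _; rewrite -[_ @^-1` _]setTI; apply: mZ.
by rewrite (probability_bigsetI_setC_blocks b A c mZ mA indep PZA).
Qed.

End Independence.

Lemma min_ord_gtP (R : realType) (n : nat) (z : 'I_n.+1 -> R) x :
  x < min_ord z <-> forall j, x < z j.
Proof.
rewrite /min_ord; split=> [/bigmin_gtP[_ zj] j | zj]; first exact: zj.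
by apply/bigmin_gtP; split=> [|j _]; apply: zj.
Qed.

Lemma preimage_min_ord_gt (T : Type) (R : realType) (n : nat)
    (z : 'I_n.+1 -> T -> R) x :
  (fun t => min_ord (fun j => z j t)) @^-1` `]x, +oo[ =
  \big[setI/setT]_j (z j @^-1` `]x, +oo[).
Proof.
apply/seteqP; split=> t; rewrite /preimage /= in_itv /= andbT.
  by move=> /min_ord_gtP zt; apply/in_bigsetI => j _; rewrite /= in_itv /= andbT.
move=> /in_bigsetI zt; apply/min_ord_gtP => j.
by have := zt j isT; rewrite /= in_itv /= andbT.
Qed.

Lemma preimage_min_ord_le (T : Type) (R : realType) (n : nat)
    (z : 'I_n.+1 -> T -> R) x :
  (fun t => min_ord (fun j => z j t)) @^-1` `]-oo, x] =
  \big[setU/set0]_j (z j @^-1` `]-oo, x]).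
Proof.
rewrite -setCitvr -preimage_setC preimage_min_ord_gt setC_bigsetI.
by apply: eq_bigr => j _; rewrite preimage_setC.
Qed.

Lemma preimage_max_le (T : Type) (R : realType) (f g : T -> R) x :
  (fun t => Num.max (f t) (g t)) @^-1` `]-oo, x] =
  f @^-1` `]-oo, x] `&` g @^-1` `]-oo, x].
Proof.
by apply/seteqP; split=> t; rewrite /preimage /= !in_itv /= ge_max => /andP.
Qed.

Definition pooled {T R : Type} {n : nat} (X Y : 'I_n.+1 -> T -> R)
    (k : 'I_n.+1 + 'I_n.+1) : T -> R :=
  match k with inl j => X j | inr j => Y j end.

Section PooledSample.
Context {d} {T : measurableType d} {R : realType} (P : probability T R)
  {n : nat} (X Y : 'I_n.+1 -> T -> R).
Local Notation Z := (pooled X Y).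
Local Notation F := (Defs.cdf P (X ord0)).
Hypotheses (mZ : forall k, measurable_fun setT (Z k))
  (indep : mutually_independent P Z) (iid : identically_distributed P Z).

Let measurable_Z_preimage k B : measurable B -> measurable (Z k @^-1` B).
Proof. by move=> mB; rewrite -[_ @^-1` _]setTI; apply: mZ. Qed.

Lemma probability_pooled_le k x : P (Z k @^-1` `]-oo, x]) = (F x)%:E.
Proof.
rewrite (iid k (inl ord0)) // /Defs.cdf fineK //.
by apply: fin_num_measure; apply: (measurable_Z_preimage (inl ord0)).
Qed.

Lemma probability_pooled_gt k x : P (Z k @^-1` `]x, +oo[) = (1 - F x)%:E.
Proof.
rewrite -setCitvl -preimage_setC probability_setC ?probability_pooled_le //.
exact: measurable_Z_preimage.
Qed.

Lemma cdf_pooled_ge0_le1 x : 0 <= F x <= 1.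
Proof.
have PZ := probability_pooled_le (inl ord0) x.
rewrite -!lee_fin -PZ measure_ge0 probability_le1 //.
exact: (measurable_Z_preimage (inl ord0)).
Qed.

Lemma cdf_pooled_nondecreasing : {homo F : x y / x <= y}.
Proof.
move=> x y xy; rewrite -lee_fin -!(probability_pooled_le (inl ord0)).
apply: le_measure; rewrite ?inE; try exact: (measurable_Z_preimage (inl ord0)).
by move=> t /=; rewrite !in_itv /= => /le_trans; apply.
Qed.

Lemma cdf_max_of_mins_pooled :
  Defs.cdf P
    (fun t => Num.max (min_ord (fun j => X j t)) (min_ord (fun j => Y j t))) =
  cdf_max_of_mins n F.
Proof.
apply/funext => x.
pose b (k : 'I_n.+1 + 'I_n.+1) := if k is inl _ then true else false.
have := probability_bigsetI_setC_blocks P b (fun=> [set` `]x, +oo[]) _ mZ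
  (fun=> measurable_itv _) indep (fun k => probability_pooled_gt k x).
rewrite !big_bool /= !big_sumType /= !big_pred0_eq !eqxx setIT setTI mulr1 mul1r.
rewrite -!preimage_min_ord_gt -setCitvl -!preimage_setC !setCK.
rewrite -preimage_max_le => PU.
by rewrite /Defs.cdf PU /= !prodr_const !card_ord.
Qed.

Lemma cdf_min_of_maxes_pooled :
  Defs.cdf P (fun t => min_ord (fun j => Num.max (X j t) (Y j t))) =
  cdf_min_of_maxes n F.
Proof.
apply/funext => x.
pose b (k : 'I_n.+1 + 'I_n.+1) := match k with inl j | inr j => j end.
have := probability_bigsetU_blocks P b (fun=> [set` `]-oo, x]]) _ mZ
  (fun=> measurable_itv _) indep (fun k => probability_pooled_le k x).
under eq_bigr => k _ do rewrite big_sumType /= !big_pred1_eq -preimage_max_le.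
rewrite -preimage_min_ord_le => PV.
rewrite /Defs.cdf PV /=.
under eq_bigr => k _ do rewrite big_sumType /= !big_pred1_eq.
by rewrite prodr_const card_ord.
Qed.

End PooledSample.

Lemma hazardE d (T : measurableType d) (R : realType) (P : probability T R)
    (W : T -> R) x :
  hazard P W x = hazard_of_cdf (Defs.cdf P W) x.
Proof. by []. Qed.

Theorem corollary4p1 (d : measure_display) (T : measurableType d)
  (R : realType) (P : probability T R) (n : nat)
  (X Y : 'I_n.+1 -> T -> R) :
  let Z := fun k : 'I_n.+1 + 'I_n.+1 =>
             match k with inl j => X j | inr j => Y j end in
  (forall k, measurable_fun setT (Z k)) ->
  mutually_independent P Z ->
  identically_distributed P Z ->
  (forall k, abs_continuous P (Z k)) ->
  (forall k, support_nonneg_halfline P (Z k)) ->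
  hr_ratio_ge P
    (fun t => Num.max (min_ord (fun j => X j t)) (min_ord (fun j => Y j t)))
    (fun t => min_ord (fun j => Num.max (X j t) (Y j t))).
Proof.
move=> Z mZ indep iid _ _ x y _ xy _ _ dUx dUy hUx hUy.
rewrite !hazardE (cdf_max_of_mins_pooled P X Y mZ indep iid) in dUx dUy hUx hUy *.
rewrite (cdf_min_of_maxes_pooled P X Y mZ indep iid).
apply: hazard_ratio_min_of_maxes_nondecreasing => //.
- exact: cdf_pooled_ge0_le1 mZ iid.
- exact: cdf_pooled_nondecreasing mZ iid.
Qed.
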